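(* Let $H$ be a bounded strongly planar embedding of a marked poset $(P,A,\lambda)$, and let $F$ be a bounded face of $H$ not containing either of the two additional edges joining $\hat0$ and $\hat1$. Suppose the left boundary of $F$ is the chain $p_1>p_2>\cdots>p_k$ and the right boundary is $p_1=q_1>q_2>\cdots>q_\ell=p_k$. Let $L_1,\dots,L_{\mathcal N}$, $\mathcal N=\binom{k+\ell-4}{\ell-2}$, be the total orders on $\{p_1,\dots,p_k,q_2,\dots,q_{\ell-1}\}$ extending both chains, and let $\widehat P_j$ be the poset on $\widehat P$ whose order is generated by the order of $\widehat P$ together with $L_j$. Then $\bigcup_{j=1}^{\mathcal N}\mathcal{O}(\widehat P_j,\widehat A)_\lambda=\mathcal{O}(\widehat P,\widehat A)_\lambda$, and for $i\ne j$ the intersection $\mathcal{O}(\widehat P_i,\widehat A)_\lambda\cap\mathcal{O}(\widehat P_j,\widehat A)_\lambda$ is a common face of both polytopes (possibly empty); i.e. these polytopes form a subdivision of $\mathcal{O}(\widehat P,\widehat A)_\lambda$.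
   Context: A marked poset $(P,A,\lambda)$ consists of a finite poset $P$, a subposet $A\subseteq P$ containing all minimal and all maximal elements of $P$, and an order-preserving map $\lambda:A\to\mathbb{R}$. For a poset $Q$, $B\subseteq Q$ and $\mu:B\to\mathbb{R}$, $\mathcal{O}(Q,B)_\mu=\{x\in\mathbb{R}^Q:x_p\le x_q\text{ for }p<q\text{ in }Q,\ x_b=\mu(b)\text{ for }b\in B\}$. Let $\widehat P=P\sqcup\{\hat0,\hat1\}$ with $\hat0<p<\hat1$ for all $p\in P$, $\widehat A=A\cup\{\hat0,\hat1\}$, and extend $\lambda$ by $\lambda(\hat0)=\min_{a\in A}\lambda(a)$, $\lambda(\hat1)=\max_{a\in A}\lambda(a)$ (so $\mathcal{O}(\widehat P,\widehat A)_\lambda$ is $\mathcal{O}(P,A)_\lambda$ with two fixed coordinates appended); elements of $\widehat A$ are called marked. $P$ is strongly planar if the Hasse diagram of $\widehat P$ has a planar drawing in which $y$-coordinates strictly increase along every covering relation. A bounded embedding $H$ is such a drawing together with two additional edges joining $\hat0$ and $\hat1$, one drawn to the left of everything else and one to the right, regarded as a plane graph. For a bounded face $F$ of $H$, $\min F$ and $\max F$ are the least and greatest elements of $\widehat P$ on its boundary; removing them splits the boundary into two paths, and the left (resp. right) boundary of $F$ is the left (resp. right) path together with $\min F$ and $\max F$ (each is a saturated chain). $H$ is a bounded strongly planar embedding of $(P,A,\lambda)$ if for every bounded face $F$ whose left boundary contains an element of $\widehat A$, both $\min F$ and $\max F$ lie in $\widehat A$. *)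

From Stdlib Require Import Reals Relations.
From mathcomp Require Import all_boot.
Set Implicit Arguments. Unset Strict Implicit. Unset Printing Implicit Defensive.
Open Scope R_scope.

(* \hat P = P + {\hat0, \hat1}: None = \hat0, Some None = \hat1, Some (Some a) = a *)
Notation hat P := (option (option P)).
Definition hbot {P : Type} : hat P := None.
Definition htop {P : Type} : hat P := Some None.
Definition helt {P : Type} (a : P) : hat P := Some (Some a).

Definition is_poset (P : Type) (le : P -> P -> Prop) : Prop :=
  (forall a, le a a) /\
  (forall a b, le a b -> le b a -> a = b) /\
  (forall a b c, le a b -> le b c -> le a c).

Definition hle {P : Type} (le : P -> P -> Prop) (u v : hat P) : Prop :=
  match u, v with
  | None, _ => True
  | _, Some None => True
  | Some (Some a), Some (Some b) => le a b
  | _, _ => False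
  end.
Definition hlt {P : Type} (le : P -> P -> Prop) (u v : hat P) : Prop :=
  hle le u v /\ u <> v.
Definition hcov {P : Type} (le : P -> P -> Prop) (u v : hat P) : Prop :=
  hlt le u v /\ ~ (exists w, hlt le u w /\ hlt le w v).

Definition hmarked {P : Type} (A : P -> Prop) (u : hat P) : Prop :=
  match u with Some (Some a) => A a | _ => True end.

(* (P, A, lam) is a marked poset; A is given as a predicate, lam on A *)
Definition marked_poset {P : Type} (le : P -> P -> Prop) (A : P -> Prop)
    (lam : P -> R) : Prop :=
  is_poset le /\
  (forall p, (forall q, le q p -> q = p) -> A p) /\
  (forall p, (forall q, le p q -> q = p) -> A p) /\
  (forall a b, A a -> A b -> le a b -> (lam a <= lam b)).

Definition is_minval {P : Type} (A : P -> Prop) (lam : P -> R) (m : R) : Prop :=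
  (exists a, A a /\ lam a = m) /\ (forall a, A a -> (m <= lam a)).
Definition is_maxval {P : Type} (A : P -> Prop) (lam : P -> R) (M : R) : Prop :=
  (exists a, A a /\ lam a = M) /\ (forall a, A a -> (lam a <= M)).

(* O(Q, \hat A)_lam  in R^{\hat P}, for an order relation Q on \hat P;
   lam is extended by lam(\hat0) = min, lam(\hat1) = max. *)
Definition opoly {P : Type} (Q : hat P -> hat P -> Prop) (A : P -> Prop)
    (lam : P -> R) (x : hat P -> R) : Prop :=
  (forall u v, Q u v -> (x u <= x v)) /\
  (forall a, A a -> x (helt a) = lam a) /\
  is_minval A lam (x hbot) /\ is_maxval A lam (x htop).

Definition linf {P : finType} (c x : hat P -> R) : R :=
  \big[Rplus/0]_(u : hat P) (c u * x u).

(* Fc is a face of the polytope K (empty set and K itself included) *)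
Definition is_face {P : finType} (K Fc : (hat P -> R) -> Prop) : Prop :=
  exists (c : hat P -> R) (b : R),
    (forall x, K x -> (linf c x <= b)) /\
    (forall x, Fc x <-> (K x /\ linf c x = b)).

Definition pt := (R * R)%type.

(* curve identifiers: Hasse edge u -> v, left extra edge, right extra edge *)
Inductive cid (P : Type) := CE of hat P & hat P | CL | CR.
Arguments CL {P}. Arguments CR {P}.

Record drawing (P : Type) := Drawing {
  dpos : hat P -> pt;
  dedge : hat P -> hat P -> R -> pt;  (* curve (on [0,1]) of the edge u -> v *)
  dleft : R -> pt;                    (* extra edge \hat0 -> \hat1 on the left *)
  dright : R -> pt                    (* extra edge \hat0 -> \hat1 on the right *)
}.

Definition dcurve {P : Type} (D : drawing P) (c : cid P) : R -> pt :=
  match c with CE u v => dedge D u v | CL => dleft D | CR => dright D end.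
Definition cvalid {P : Type} (le : P -> P -> Prop) (c : cid P) : Prop :=
  match c with CE u v => hcov le u v | _ => True end.
Definition cstart {P : Type} (c : cid P) : hat P :=
  match c with CE u _ => u | _ => hbot end.
Definition cend {P : Type} (c : cid P) : hat P :=
  match c with CE _ v => v | _ => htop end.

Definition in01 (t : R) : Prop := (0 <= t <= 1).
Definition open01 (t : R) : Prop := (0 < t < 1).

Definition cont_path (g : R -> pt) : Prop :=
  continuity (fun t => fst (g t)) /\ continuity (fun t => snd (g t)).

Definition up_curve (g : R -> pt) (a b : pt) : Prop :=
  cont_path g /\ g 0 = a /\ g 1 = b /\
  (forall s t, (0 <= s) -> (s < t) -> (t <= 1) -> (snd (g s) < snd (g t))).

Definition dimg {P : Type} (le : P -> P -> Prop) (D : drawing P) (z : pt) : Prop :=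
  (exists w, z = dpos D w) \/
  (exists c t, cvalid le c /\ in01 t /\ z = dcurve D c t).

Definition bounded_strongly_planar {P : Type} (le : P -> P -> Prop)
    (D : drawing P) : Prop :=
  (forall u v, dpos D u = dpos D v -> u = v) /\
  (forall c, cvalid le c -> up_curve (dcurve D c) (dpos D (cstart c)) (dpos D (cend c))) /\
  (forall c t w, cvalid le c -> open01 t -> dcurve D c t <> dpos D w) /\
  (forall c1 c2 s t, cvalid le c1 -> cvalid le c2 -> c1 <> c2 ->
     open01 s -> open01 t -> dcurve D c1 s <> dcurve D c2 t) /\
  (* the left extra edge lies to the left of everything else *)
  (forall z, dimg le D z -> (forall t, in01 t -> z <> dleft D t) ->
     exists t, in01 t /\ snd (dleft D t) = snd z /\ (fst (dleft D t) < fst z)) /\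
  (* the right extra edge lies to the right of everything else *)
  (forall z, dimg le D z -> (forall t, in01 t -> z <> dright D t) ->
     exists t, in01 t /\ snd (dright D t) = snd z /\ (fst z < fst (dright D t))).

(* F is a face: a path-connected component of R^2 minus the drawing *)
Definition dface {P : Type} (le : P -> P -> Prop) (D : drawing P) (F : pt -> Prop) : Prop :=
  exists z0, ~ dimg le D z0 /\
    forall z, F z <-> (~ dimg le D z /\
       exists g, cont_path g /\ g 0 = z0 /\ g 1 = z /\
                 forall t, in01 t -> ~ dimg le D (g t)).

Definition pbounded (F : pt -> Prop) : Prop :=
  exists M, forall z, F z -> (Rabs (fst z) <= M /\ Rabs (snd z) <= M).

Definition pclosure (F : pt -> Prop) (z : pt) : Prop :=
  forall eps, (0 < eps) -> exists w, F w /\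
    (Rabs (fst w - fst z) < eps) /\ (Rabs (snd w - snd z) < eps).

Definition on_bd {P : Type} (D : drawing P) (F : pt -> Prop) (v : hat P) : Prop :=
  pclosure F (dpos D v).
Definition face_min {P : Type} (le : P -> P -> Prop) (D : drawing P) (F : pt -> Prop)
    (m : hat P) : Prop :=
  on_bd D F m /\ forall v, on_bd D F v -> hle le m v.
Definition face_max {P : Type} (le : P -> P -> Prop) (D : drawing P) (F : pt -> Prop)
    (m : hat P) : Prop :=
  on_bd D F m /\ forall v, on_bd D F v -> hle le v m.

Definition face_on_right (F : pt -> Prop) (g : R -> pt) : Prop :=
  forall t, open01 t -> exists eps, (0 < eps) /\
    forall d, (0 < d < eps) -> F (fst (g t) + d, snd (g t)).
Definition face_on_left (F : pt -> Prop) (g : R -> pt) : Prop :=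
  forall t, open01 t -> exists eps, (0 < eps) /\
    forall d, (0 < d < eps) -> F (fst (g t) - d, snd (g t)).

(* elements of the left (resp. right) boundary of F: min F, max F, and the
   endpoints of the edges of the boundary having F on their right (resp. left) *)
Definition left_bd {P : Type} (le : P -> P -> Prop) (D : drawing P) (F : pt -> Prop)
    (v : hat P) : Prop :=
  face_min le D F v \/ face_max le D F v \/
  exists w, (hcov le v w /\ face_on_right F (dedge D v w)) \/
            (hcov le w v /\ face_on_right F (dedge D w v)).
Definition right_bd {P : Type} (le : P -> P -> Prop) (D : drawing P) (F : pt -> Prop)
    (v : hat P) : Prop :=
  face_min le D F v \/ face_max le D F v \/
  exists w, (hcov le v w /\ face_on_left F (dedge D v w)) \/
            (hcov le w v /\ face_on_left F (dedge D w v)).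

Definition bounded_embedding_of {P : Type} (le : P -> P -> Prop) (A : P -> Prop)
    (D : drawing P) : Prop :=
  bounded_strongly_planar le D /\
  forall F, dface le D F -> pbounded F ->
    (exists v, hmarked A v /\ left_bd le D F v) ->
    (forall m, face_min le D F m -> hmarked A m) /\
    (forall m, face_max le D F m -> hmarked A m).

Definition desc_chain {P : eqType} (le : P -> P -> Prop) (s : seq (hat P)) : Prop :=
  forall i j, (i < j < size s)%N -> hlt le (nth hbot s j) (nth hbot s i).

Definition chain_lin_ext {P : eqType} (p q : seq (hat P))
    (L : hat P -> hat P -> Prop) : Prop :=
  (forall u v, L u v -> u \in p ++ q /\ v \in p ++ q) /\
  (forall u, u \in p ++ q -> L u u) /\
  (forall u v, L u v -> L v u -> u = v) /\
  (forall u v w, L u v -> L v w -> L u w) /\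
  (forall u v, u \in p ++ q -> v \in p ++ q -> L u v \/ L v u) /\
  (forall i j, (i < j < size p)%N -> L (nth hbot p j) (nth hbot p i)) /\
  (forall i j, (i < j < size q)%N -> L (nth hbot q j) (nth hbot q i)).

Definition gen_order {P : Type} (le : P -> P -> Prop) (L : hat P -> hat P -> Prop) :
    hat P -> hat P -> Prop :=
  clos_refl_trans (hat P) (fun u v => hle le u v \/ L u v).

From Stdlib Require Import Reals Relations.
From mathcomp Require Import all_boot.
Open Scope R_scope.
From Stdlib Require Import Lra ClassicalEpsilon.
From HB Require Import structures.
From mathcomp Require Import zify.
Set Implicit Arguments. Unset Strict Implicit.

(* Write K = O(P^, A^)_lam and K_L = O(P^_L, A^)_lam for a total order L on the
   elements S of the two boundary chains p and q.  A point x lies in K_L iff it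
   lies in K and is monotone along L (opoly_gen_iff).  The proof has two parts,
   and neither needs the planar drawing: it only uses that p and q are chains
   of P^.
   - Covering: a point x of K is monotone along the "sweep order" on S, which
     sorts S by the value of x and breaks ties by the rank in P^ (then by an
     arbitrary enumeration).  Ranks strictly increase along P^, so this total
     order extends both chains, whence x lies in some K_L.
   - Faces: for two total orders L1, L2 on S, K_L1 /\ K_L2 is the subset of K_L1
     where x u = x v for all pairs with u <=_L1 v and v <=_L2 u.  Each such
     inequality x u <= x v is valid on K_L1, and the set where finitely many
     valid inequalities are tight is a face, cut out by their sum (tight_face). *)

(* (R, +, 0) as a commutative monoid, so that the bigop library applies to linf. *)
Lemma Rplus_associative : associative Rplus.
Proof. by move=> a b c; rewrite Rplus_assoc. Qed.
HB.instance Definition _ :=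
  Monoid.isComLaw.Build R 0 Rplus Rplus_associative Rplus_comm Rplus_0_l.

Section Functionals.
Variable P : finType.
Implicit Types (x c : hat P -> R).

Lemma linf_add x c1 c2 : linf (fun w => c1 w + c2 w) x = linf c1 x + linf c2 x.
Proof. rewrite /linf -big_split; apply: eq_bigr => w _ /=; lra. Qed.

Lemma linf_indicator x (u : hat P) (k : R) :
  linf (fun w => if w == u then k else 0) x = k * x u.
Proof. rewrite /linf (bigD1 u) //= eqxx big1 => [|w /negbTE ->]; lra. Qed.

Lemma linf_sum (I : finType) (Q : pred I) (f : I -> hat P -> R) x :
  linf (fun w => \big[Rplus/0]_(i | Q i) f i w) x =
  \big[Rplus/0]_(i | Q i) linf (f i) x.
Proof.
rewrite /linf exchange_big /=; apply: eq_bigr => w _.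
by rewrite (big_morph (fun s => s * x w) (fun a b => Rmult_plus_distr_r a b (x w))
                      (Rmult_0_l (x w))).
Qed.

Definition diff_coef (u v : hat P) (w : hat P) : R :=
  (if w == u then 1 else 0) + (if w == v then -1 else 0).

Lemma linf_diff_coef (u v : hat P) x : linf (diff_coef u v) x = x u - x v.
Proof. rewrite /diff_coef linf_add !linf_indicator; lra. Qed.
End Functionals.

Section NonposSums.
Variables (I : finType) (Q : pred I) (f : I -> R).
Hypothesis f_nonpos : forall i, Q i -> f i <= 0.

Lemma sum_nonpos : \big[Rplus/0]_(i | Q i) f i <= 0.
Proof. by apply: (big_ind (fun r => r <= 0)) => [|a b|i /f_nonpos]; lra. Qed.

Lemma sum_nonpos_eq0 : \big[Rplus/0]_(i | Q i) f i = 0 -> forall i, Q i -> f i = 0.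
Proof.
move=> sum0 i Qi; rewrite (bigD1 i) //= in sum0.
have rest : \big[Rplus/0]_(j | Q j && (j != i)) f j <= 0.
  by apply: (big_ind (fun r => r <= 0)) => [|a b|j /andP [/f_nonpos]]; lra.
have := f_nonpos Qi; lra.
Qed.
End NonposSums.

(* Classical decision of a proposition, to filter finite sums by Prop conditions. *)
Definition dec (Q : Prop) : bool := if excluded_middle_informative Q then true else false.
Lemma decP (Q : Prop) : reflect Q (dec Q).
Proof. by rewrite /dec; case: excluded_middle_informative => h; constructor. Qed.

Section Faces.
Variable P : finType.
Implicit Types (K F G : (hat P -> R) -> Prop).

Lemma is_face_ext K F G : is_face K F -> (forall x, F x <-> G x) -> is_face K G.
Proof.
move=> [c [b [valid faceF]]] FG; exists c, b; split=> // x.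
by rewrite -FG faceF.
Qed.

(* If finitely many inequalities x u <= x v are valid on K, the subset of K where
   all of them are equalities is a face, on which the sum of the x u - x v
   attains its maximum 0. *)
Lemma tight_face K (Q : pred (hat P * hat P)) :
  (forall x, K x -> forall uv, Q uv -> x uv.1 <= x uv.2) ->
  is_face K (fun x => K x /\ forall uv, Q uv -> x uv.1 = x uv.2).
Proof.
move=> valid.
exists (fun w => \big[Rplus/0]_(uv | Q uv) diff_coef uv.1 uv.2 w), 0.
have linfE x : linf (fun w => \big[Rplus/0]_(uv | Q uv) diff_coef uv.1 uv.2 w) x =
               \big[Rplus/0]_(uv | Q uv) (x uv.1 - x uv.2).
  by rewrite linf_sum; apply: eq_bigr => uv _; rewrite linf_diff_coef.
split=> [x Kx | x]; rewrite linfE.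
  by apply: sum_nonpos => uv /(valid x Kx)/Rle_minus.
split=> [[Kx tight] | [Kx sum0]]; split=> //.
  by rewrite big1 // => uv /tight /Rminus_diag_eq.
move=> uv Quv; apply: Rminus_diag_uniq; apply: (sum_nonpos_eq0 _ sum0 Quv).
by move=> uv' /(valid x Kx)/Rle_minus.
Qed.
End Faces.

Section GeneratedOrders.
Variables (P : finType) (le : P -> P -> Prop) (A : P -> Prop) (lam : P -> R).

Lemma opoly_gen_iff (L : hat P -> hat P -> Prop) x :
  opoly (gen_order le L) A lam x <->
  opoly (hle le) A lam x /\ (forall u v, L u v -> x u <= x v).
Proof.
split=> [[mono marks] | [[mono marks] monoL]].
  by split; [split=> // u v uv | move=> u v uv]; apply: mono; apply: rt_step; [left|right].
split=> // u v; elim=> {u v} [u v [/mono|/monoL] //|u|u v w _ ? _ ?]; lra.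
Qed.

Lemma opposite_pairs_face (S : hat P -> Prop) (L1 L2 : hat P -> hat P -> Prop) :
  (forall u v, L2 u v -> S u /\ S v) ->
  (forall u v, S u -> S v -> L1 u v \/ L1 v u) ->
  is_face (opoly (gen_order le L1) A lam)
    (fun x => opoly (gen_order le L1) A lam x /\ opoly (gen_order le L2) A lam x).
Proof.
move=> supp2 total1.
pose opposite := [pred uv : hat P * hat P | dec (L1 uv.1 uv.2 /\ L2 uv.2 uv.1)].
apply: is_face_ext (tight_face (Q := opposite) _) _.
  by move=> x /opoly_gen_iff [_ monoL1] [u v] /decP [/monoL1].
move=> x; split=> [[K1x ties] | [K1x K2x]]; split=> //.
  move/opoly_gen_iff: (K1x) => [K0x monoL1].
  apply/opoly_gen_iff; split=> // u v L2uv.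
  have [Su Sv] := supp2 _ _ L2uv.
  have [/monoL1 //|L1vu] := total1 _ _ Su Sv.
  by rewrite (ties (v, u)) /=; [lra | apply/decP].
move: K1x K2x => /opoly_gen_iff [_ monoL1] /opoly_gen_iff [_ monoL2].
by move=> [u v] /decP [/monoL1 ? /monoL2 ?]; apply: Rle_antisym.
Qed.
End GeneratedOrders.

Section Sweep.
Variables (P : finType) (le : P -> P -> Prop).
Hypothesis le_poset : is_poset le.

Lemma hle_trans (u v w : hat P) : hle le u v -> hle le v w -> hle le u w.
Proof.
case: le_poset => _ [_ trans].
by case: u => [[a|]|]; case: v => [[b|]|]; case: w => [[c|]|] //=; apply: trans.
Qed.

Lemma hle_anti (u v : hat P) : hle le u v -> hle le v u -> u = v.
Proof.
case: le_poset => _ [anti _].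
by case: u => [[a|]|]; case: v => [[b|]|] //= ab ba; rewrite (anti _ _ ab ba).
Qed.

Lemma hlt_trans (u v w : hat P) : hlt le u v -> hlt le v w -> hlt le u w.
Proof.
move=> [uv u_ne_v] [vw v_ne_w]; split; first exact: hle_trans uv vw.
by move=> u_eq_w; subst w; apply: u_ne_v; apply: hle_anti.
Qed.

Definition rank (u : hat P) : nat := #|[pred w : hat P | dec (hlt le w u)]|.

Lemma rank_lt (u v : hat P) : hlt le u v -> (rank u < rank v)%N.
Proof.
move=> uv; apply: proper_card; apply/properP; split.
  by apply/subsetP => w; rewrite !inE => /decP wu; apply/decP; apply: hlt_trans wu uv.
by exists u; rewrite !inE; apply/decP => // -[].
Qed.

Definition tie_le (u v : hat P) : Prop :=
  (rank u < rank v)%N \/ (rank u = rank v /\ (enum_rank u <= enum_rank v)%N).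

Lemma tie_le_anti (u v : hat P) : tie_le u v -> tie_le v u -> u = v.
Proof.
by rewrite /tie_le => uv vu; apply/enum_rank_inj/ord_inj; lia.
Qed.

Variable x : hat P -> R.
Hypothesis x_mono : forall u v, hle le u v -> x u <= x v.

Definition sweep_le (u v : hat P) : Prop := x u < x v \/ (x u = x v /\ tie_le u v).

Lemma sweep_le_refl (u : hat P) : sweep_le u u.
Proof. by right; split=> //; right; split. Qed.

Lemma sweep_le_anti (u v : hat P) : sweep_le u v -> sweep_le v u -> u = v.
Proof.
by move=> [uv|[uv tuv]] [vu|[vu tvu]]; try lra; apply: tie_le_anti.
Qed.

Lemma sweep_le_trans (u v w : hat P) : sweep_le u v -> sweep_le v w -> sweep_le u w.
Proof.
rewrite /sweep_le /tie_le.
by move=> [uv|[uv tuv]] [vw|[vw tvw]]; try (left; lra); right; split; [lra | lia].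
Qed.

Lemma sweep_le_total (u v : hat P) : sweep_le u v \/ sweep_le v u.
Proof.
rewrite /sweep_le.
have [uv|[uv|vu]] := Rtotal_order (x u) (x v); [by left; left| |by right; left].
have [tuv|tvu] : tie_le u v \/ tie_le v u by rewrite /tie_le; lia.
  by left; right.
by right; right.
Qed.

Lemma sweep_le_hlt (u v : hat P) : hlt le u v -> sweep_le u v.
Proof.
move=> uv; have [lt | eq] := Rle_lt_or_eq_dec _ _ (x_mono (proj1 uv)); first by left.
by right; split=> //; left; apply: rank_lt.
Qed.

Definition sweep_ext (S : seq (hat P)) (u v : hat P) : Prop :=
  u \in S /\ v \in S /\ sweep_le u v.

Lemma sweep_ext_chain_lin_ext (p q : seq (hat P)) :
  desc_chain le p -> desc_chain le q -> chain_lin_ext p q (sweep_ext (p ++ q)).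
Proof.
move=> chain_p chain_q.
have in_S (s : seq (hat P)) i :
    {subset s <= p ++ q} -> (i < size s)%N -> nth hbot s i \in p ++ q.
  by move=> sub i_lt; apply/sub/mem_nth.
have chain_ext (s : seq (hat P)) : desc_chain le s -> {subset s <= p ++ q} ->
    forall i j, (i < j < size s)%N -> sweep_ext (p ++ q) (nth hbot s j) (nth hbot s i).
  move=> chain sub i j /andP [ij js]; split; [|split]; first exact: in_S.
    by apply: in_S => //; apply: ltn_trans js.
  by apply/sweep_le_hlt/chain; rewrite ij.
split; first by move=> u v [? []].
split; first by move=> u Su; do 2!split=> //; apply: sweep_le_refl.
split; first by move=> u v [_ [_ uv]] [_ [_ vu]]; apply: sweep_le_anti.
split.
  by move=> u v w [Su [_ uv]] [_ [Sw vw]]; do 2!split=> //; apply: sweep_le_trans uv vw.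
split.
  by move=> u v Su Sv; have [uv|vu] := sweep_le_total u v; [left|right]; repeat split.
by split; apply: chain_ext => // u us; rewrite mem_cat us ?orbT.
Qed.

Lemma sweep_ext_mono (S : seq (hat P)) (u v : hat P) : sweep_ext S u v -> x u <= x v.
Proof. by move=> [_ [_ [|[]]]]; lra. Qed.
End Sweep.

Lemma subdivision_cover (P : finType) (le : P -> P -> Prop) (A : P -> Prop) (lam : P -> R)
    (p q : seq (hat P)) (x : hat P -> R) :
  is_poset le -> desc_chain le p -> desc_chain le q ->
  opoly (hle le) A lam x <->
  exists L, chain_lin_ext p q L /\ opoly (gen_order le L) A lam x.
Proof.
move=> le_poset chain_p chain_q; split=> [Kx | [L [_ /opoly_gen_iff [] //]]].
have x_mono : forall u v, hle le u v -> x u <= x v by case: Kx.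
exists (sweep_ext le x (p ++ q)); split; first exact: sweep_ext_chain_lin_ext.
by apply/opoly_gen_iff; split=> // u v; apply: sweep_ext_mono.
Qed.

Lemma chain_lin_ext_face (P : finType) (le : P -> P -> Prop) (A : P -> Prop)
    (lam : P -> R) (p q : seq (hat P)) (L1 L2 : hat P -> hat P -> Prop) :
  chain_lin_ext p q L1 -> chain_lin_ext p q L2 ->
  is_face (opoly (gen_order le L1) A lam)
    (fun x => opoly (gen_order le L1) A lam x /\ opoly (gen_order le L2) A lam x).
Proof.
move=> [_ [_ [_ [_ [total1 _]]]]] [supp2 _].
exact: opposite_pairs_face supp2 total1.
Qed.

Theorem lemma5p2 (P : finType) (le : P -> P -> Prop) (A : P -> Prop) (lam : P -> R)
    (D : drawing P) (F : pt -> Prop) (p q : seq (hat P)) :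
  marked_poset le A lam ->
  bounded_embedding_of le A D ->
  dface le D F -> pbounded F ->
  ~ (exists t, open01 t /\ pclosure F (dleft D t)) ->
  ~ (exists t, open01 t /\ pclosure F (dright D t)) ->
  desc_chain le p -> (forall v, v \in p <-> left_bd le D F v) ->
  desc_chain le q -> (forall v, v \in q <-> right_bd le D F v) ->
  head hbot q = head hbot p -> last hbot q = last hbot p ->
  (forall x, opoly (hle le) A lam x <->
     exists L, chain_lin_ext p q L /\ opoly (gen_order le L) A lam x) /\
  (forall L1 L2, chain_lin_ext p q L1 -> chain_lin_ext p q L2 ->
     ~ (forall u v, L1 u v <-> L2 u v) ->
     is_face (opoly (gen_order le L1) A lam)
             (fun x => opoly (gen_order le L1) A lam x /\ opoly (gen_order le L2) A lam x) /\
     is_face (opoly (gen_order le L2) A lam)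
             (fun x => opoly (gen_order le L1) A lam x /\ opoly (gen_order le L2) A lam x)).
Proof.
move=> [le_poset _] _ _ _ _ _ chain_p _ chain_q _ _ _.
split=> [x | L1 L2 ext1 ext2 _]; first exact: subdivision_cover.
split; first exact: (chain_lin_ext_face le A lam ext1 ext2).
apply: is_face_ext (chain_lin_ext_face le A lam ext2 ext1) _.
by move=> x; split=> -[].
Qed.
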